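(* Let $A$ be a non-zero linear endomorphism of $\mathbb{E}^n$ and $\mathbf{b}$ an orthonormal basis. (a) If $n$ is odd, the forms $\mathbf{A}^r_{kl}$ ($1\le k<l\le n$) have at least one common non-zero zero. (b) The non-zero linear subspaces $W\subseteq\mathbb{E}^n$ that are maximal (under inclusion) among subspaces on which every $\mathbf{A}^r_{kl}$ vanishes identically are exactly the eigenspaces of $A$ for its real eigenvalues; in particular the dimension of such a maximal common zero-valued subspace equals the geometric multiplicity of the corresponding eigenvalue of $A$.
   Context: $\mathbb{E}^n$ is $\mathbb{R}^n$ with the standard inner product. For an orthonormal basis $\mathbf{b}=\{b_1,\dots,b_n\}$ and $1\le k<l\le n$, $R_{kl}$ is the linear map with $R_{kl}(b_k)=b_l$, $R_{kl}(b_l)=-b_k$, $R_{kl}(b_m)=0$ for $m\ne k,l$. The rotation forms of $A$ are $\mathbf{A}^r_{kl}(u):=A(u)\cdot R_{kl}(u)$. *)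

(* E^n = row vectors 'rV[R]_n over R : realType, with the
   standard inner product.  A linear endomorphism is a matrix A acting on row
   vectors by u |-> u *m A.  An (orthonormal) basis b is the square matrix B
   whose k-th row is b_k. *)
From HB Require Import structures.
From mathcomp Require Import all_boot all_order all_algebra.
From mathcomp Require Import reals.
Set Implicit Arguments. Unset Strict Implicit. Unset Printing Implicit Defensive.
Import Order.TTheory GRing.Theory Num.Theory.
Local Open Scope ring_scope.

Definition dotp (R : realType) (n : nat) (u v : 'rV[R]_n) : R :=
  \sum_(i < n) u 0 i * v 0 i.

Definition orthonormal_basis (R : realType) (n : nat) (B : 'M[R]_n) : Prop :=
  forall i j : 'I_n, dotp (row i B) (row j B) = (i == j)%:R.

Definition coords (R : realType) (n : nat) (B : 'M[R]_n) (u : 'rV[R]_n) : 'rV[R]_n :=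
  u *m invmx B.

(* R_kl: the linear map with R_kl(b_k) = b_l, R_kl(b_l) = - b_k, R_kl(b_m) = 0 *)
Definition rotR (R : realType) (n : nat) (B : 'M[R]_n) (k l : 'I_n)
  (u : 'rV[R]_n) : 'rV[R]_n :=
  coords B u 0 k *: row l B - coords B u 0 l *: row k B.

Definition rotform (R : realType) (n : nat) (A B : 'M[R]_n) (k l : 'I_n)
  (u : 'rV[R]_n) : R :=
  dotp (u *m A) (rotR B k l u).

Definition common_zero_subspace (R : realType) (n : nat) (A B W : 'M[R]_n) : Prop :=
  forall u : 'rV[R]_n, (u <= W)%MS ->
    forall k l : 'I_n, (k < l)%N -> rotform A B k l u = 0.

Definition maximal_common_zero_subspace (R : realType) (n : nat) (A B W : 'M[R]_n) : Prop :=
  W != 0 /\ common_zero_subspace A B W /\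
  forall W' : 'M[R]_n, common_zero_subspace A B W' -> (W <= W')%MS -> (W' <= W)%MS.

From HB Require Import structures.
From mathcomp Require Import all_boot all_order all_algebra.
From mathcomp Require Import reals.
From mathcomp.real_closed Require Import polyrcf.
From mathcomp Require Import ring.
Set Implicit Arguments. Unset Strict Implicit. Unset Printing Implicit Defensive.
Import Order.TTheory GRing.Theory Num.Theory.
Local Open Scope ring_scope.

(* Write x and y for the coordinates of u and of A(u) in the orthonormal basis
   b.  Then  A^r_kl(u) = x_k y_l - x_l y_k,  so all rotation forms vanish at u
   exactly when y is proportional to x, i.e. when u spans an A-stable line
   (u is an eigenvector of A, or zero).  This reduces the corollary to linear
   algebra over an arbitrary field:
   - a non-zero subspace all of whose vectors span A-stable lines lies inside
     a single eigenspace (two eigenvectors whose sum is again an eigenvector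
     share their eigenvalue); hence the maximal such subspaces are exactly
     the eigenspaces, which settles (b), the rank statement being immediate;
   - in odd dimension the characteristic polynomial has odd degree, so over a
     real closed field it has a root: A has an eigenvector, which is (a). *)

Section StableLines.
Variables (F : fieldType) (n : nat).
Implicit Types (A W : 'M[F]_n) (u v x y : 'rV[F]_n).

Definition line_stable_subspace A W : Prop :=
  forall u, (u <= W)%MS -> stablemx u A.

Definition maximal_line_stable A W : Prop :=
  W != 0 /\ line_stable_subspace A W /\
  forall W' : 'M[F]_n, line_stable_subspace A W' -> (W <= W')%MS -> (W' <= W)%MS.

Lemma proportional_rows x y :
  (forall k l : 'I_n, x 0 k * y 0 l = x 0 l * y 0 k) -> x != 0 ->
  exists c, y = c *: x.
Proof.
move=> minors x_neq0.
have [k xk_neq0] : exists k, x 0 k != 0.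
  apply/existsP; apply: contraNT x_neq0 => /existsPn x0.
  by apply/eqP/rowP => k; rewrite mxE; apply/eqP/negPn/x0.
exists (y 0 k / x 0 k); apply/rowP => l; rewrite mxE.
apply: (mulfI xk_neq0); rewrite minors; field.
exact: xk_neq0.
Qed.

Lemma eigenvalue_unique {A v a b} :
  v != 0 -> (v <= eigenspace A a)%MS -> (v <= eigenspace A b)%MS -> a = b.
Proof.
move=> v_neq0 /eigenspaceP vAa /eigenspaceP; rewrite vAa => /eqP.
by rewrite -subr_eq0 -scalerBl scaler_eq0 (negbTE v_neq0) orbF subr_eq0 => /eqP.
Qed.

Lemma stable_sum_eigenspace {A u v a} :
  u != 0 -> (u <= eigenspace A a)%MS ->
  stablemx v A -> stablemx (u + v)%R A -> (v <= eigenspace A a)%MS.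
Proof.
move=> u_neq0 uAa /eigenvectorP[b vAb] /eigenvectorP[c /eigenspaceP uvAc].
move: (uAa) (vAb) => /eigenspaceP uA /eigenspaceP vA.
have balance : (a - c) *: u = (c - b) *: v.
  apply/eqP; rewrite !scalerBl subr_eq addrAC eq_sym subr_eq.
  by rewrite -uA -vA -mulmxDl uvAc scalerDr addrC.
have [a_eq_c|a_neq_c] := eqVneq a c.
  move: balance; rewrite a_eq_c subrr scale0r => /esym/eqP.
  rewrite scaler_eq0 subr_eq0 => /orP[/eqP c_eq_b | /eqP ->]; last exact: sub0mx.
  by rewrite c_eq_b.
have u_in_b : (u <= eigenspace A b)%MS.
  have -> : u = ((c - b) / (a - c)) *: v.
    apply: (@scalerI _ _ (a - c)); first by rewrite subr_eq0.
    by rewrite balance scalerA mulrC mulfVK // subr_eq0.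
  exact: scalemx_sub.
by rewrite (eigenvalue_unique u_neq0 uAa u_in_b).
Qed.

Lemma line_stable_sub_eigenspace {A W} :
  W != 0 -> line_stable_subspace A W ->
  exists a, eigenvalue A a /\ (W <= eigenspace A a)%MS.
Proof.
move=> W_neq0 Wstable.
have [i Wi_neq0] : exists i, row i W != 0.
  apply/existsP; apply: contraNT W_neq0 => /existsPn W0.
  by apply/eqP/row_matrixP => i; rewrite row0; apply/eqP/negPn/W0.
have /eigenvectorP[a Wi_a] := Wstable _ (row_sub i W).
exists a; split; first by apply/eigenvalueP; exists (row i W) => //; apply/eigenspaceP.
apply/row_subP => j; apply: (stable_sum_eigenspace Wi_neq0 Wi_a).
  exact/Wstable/row_sub.
by apply/Wstable; rewrite addmx_sub // row_sub.
Qed.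

Lemma eigenspace_line_stable A a : line_stable_subspace A (eigenspace A a).
Proof. by move=> u u_a; apply/eigenvectorP; exists a. Qed.

Lemma maximal_line_stableP A W :
  maximal_line_stable A W <->
  exists a, eigenvalue A a /\ (W == eigenspace A a)%MS.
Proof.
split=> [[W_neq0 [Wstable Wmax]] | [a [a_eig /andP[WE EW]]]].
  have [a [a_eig WE]] := line_stable_sub_eigenspace W_neq0 Wstable.
  by exists a; rewrite WE (Wmax _ (eigenspace_line_stable (a:=a)) WE).
have [v v_a v_neq0] := eigenvalueP a_eig.
have vW : (v <= W)%MS by apply: submx_trans EW; apply/eigenspaceP.
have W_neq0 : W != 0 by apply: contraNneq v_neq0 => W0; move: vW; rewrite W0 submx0.
split=> //; split=> [u uW | W' W'stable WW'].
  by apply: eigenspace_line_stable; apply: submx_trans WE.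
have W'_neq0 : W' != 0.
  by apply: contraNneq W_neq0 => W'0; move: WW'; rewrite W'0 submx0.
have [b [_ W'b]] := line_stable_sub_eigenspace W'_neq0 W'stable.
have v_b : (v <= eigenspace A b)%MS by rewrite (submx_trans vW) // (submx_trans WW').
have v_a' : (v <= eigenspace A a)%MS by apply/eigenspaceP.
apply: submx_trans EW; by rewrite (eigenvalue_unique v_neq0 v_a' v_b).
Qed.

End StableLines.

(* In odd dimension the characteristic polynomial has odd degree, hence a
   root over a real closed field: A has an eigenvector. *)
Lemma odd_dim_eigenvector (R : rcfType) (n : nat) (A : 'M[R]_n) :
  odd n -> exists2 v : 'rV[R]_n, v != 0 & stablemx v A.
Proof.
move=> n_odd.
have [a a_root] : {a | root (char_poly A) a}.
  by apply: odd_poly_root; rewrite size_char_poly /= negbK.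
have /eigenvalueP[v v_a v_neq0] : eigenvalue A a by rewrite eigenvalue_root_char.
by exists v => //; apply/eigenvectorP; exists a; apply/eigenspaceP.
Qed.

Section RotationForms.
Variables (R : realType) (n : nat).
Implicit Types (A B W : 'M[R]_n) (u v : 'rV[R]_n).

Lemma dotp_row v B l : dotp v (row l B) = (v *m B^T) 0 l.
Proof. by rewrite /dotp !mxE; apply: eq_bigr => i _; rewrite !mxE. Qed.

Lemma dotpBZ u v w (a b : R) :
  dotp u (a *: v - b *: w) = a * dotp u v - b * dotp u w.
Proof.
rewrite /dotp !mulr_sumr -sumrB; apply: eq_bigr => i _; rewrite !mxE.
by rewrite mulrBr !mulrA [u 0 i * a]mulrC [u 0 i * b]mulrC.
Qed.

Variable B : 'M[R]_n.
Hypothesis B_orthonormal : orthonormal_basis B.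

Lemma orthonormal_mulmx_tr : B *m B^T = 1%:M.
Proof.
apply/matrixP => i j; rewrite [RHS]mxE -B_orthonormal /dotp !mxE.
by apply: eq_bigr => k _; rewrite !mxE.
Qed.

Lemma orthonormal_unitmx : B \in unitmx.
Proof. by have [] := mulmx1_unit orthonormal_mulmx_tr. Qed.

Lemma orthonormal_invmx : invmx B = B^T.
Proof.
rewrite -[invmx B]mulmx1 -orthonormal_mulmx_tr mulmxA.
by rewrite mulVmx ?orthonormal_unitmx // mul1mx.
Qed.

Lemma coordsK u : coords B u *m B = u.
Proof. exact: mulmxKV orthonormal_unitmx u. Qed.

Lemma rotform_coords A k l u :
  rotform A B k l u =
  coords B u 0 k * coords B (u *m A) 0 l - coords B u 0 l * coords B (u *m A) 0 k.
Proof.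
rewrite /rotform /rotR dotpBZ !dotp_row /coords orthonormal_invmx.
by rewrite [_ * (_ *m B^T) 0 l]mulrC.
Qed.

Lemma rotforms_vanishP A u :
  (forall k l : 'I_n, (k < l)%N -> rotform A B k l u = 0) <-> stablemx u A.
Proof.
set x := coords B u; set y := coords B (u *m A).
split=> [vanish | /eigenvectorP[a /eigenspaceP uA] k l _]; last first.
  by rewrite rotform_coords /y uA /coords -scalemxAl !mxE; ring.
have minors_lt (i j : 'I_n) : (i < j)%N -> x 0 i * y 0 j = x 0 j * y 0 i.
  by move=> /vanish; rewrite rotform_coords => /eqP; rewrite subr_eq0 => /eqP.
have minors (k l : 'I_n) : x 0 k * y 0 l = x 0 l * y 0 k.
  case: (ltngtP k l) => [/minors_lt // | /minors_lt // | /val_inj -> //].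
have [-> | u_neq0] := eqVneq u 0; first by rewrite mul0mx sub0mx.
have x_neq0 : x != 0.
  by apply: contraNneq u_neq0 => x0; rewrite -(coordsK u) -/x x0 mul0mx.
have [c y_cx] := proportional_rows minors x_neq0.
apply/eigenvectorP; exists c; apply/eigenspaceP.
by rewrite -[u *m A]coordsK -/y y_cx -scalemxAl coordsK.
Qed.

Lemma common_zero_subspaceE A W :
  common_zero_subspace A B W <-> line_stable_subspace A W.
Proof.
by split=> zeroW u uW; [apply/rotforms_vanishP | apply/rotforms_vanishP]; apply: zeroW.
Qed.

Lemma maximal_common_zero_subspaceE A W :
  maximal_common_zero_subspace A B W <-> maximal_line_stable A W.
Proof.
rewrite /maximal_common_zero_subspace /maximal_line_stable.
split=> [[W_neq0 [zeroW Wmax]] | [W_neq0 [zeroW Wmax]]];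
  (split=> //; split; first exact/common_zero_subspaceE);
  by move=> W' /common_zero_subspaceE; apply: Wmax.
Qed.

End RotationForms.

Theorem corollary2p9 (R : realType) (n : nat) (A B : 'M[R]_n) :
  A != 0 -> orthonormal_basis B ->
  (* (a) *)
  (odd n -> exists u : 'rV[R]_n, u != 0 /\
      forall k l : 'I_n, (k < l)%N -> rotform A B k l u = 0) /\
  (* (b) *)
  (forall W : 'M[R]_n,
      maximal_common_zero_subspace A B W <->
      exists a : R, eigenvalue A a /\ (W == eigenspace A a)%MS /\
                    \rank W = \rank (eigenspace A a)).
Proof.
move=> _ B_orthonormal; split.
  move=> n_odd; have [v v_neq0 v_stable] := odd_dim_eigenvector A n_odd.
  by exists v; split=> //; apply/(rotforms_vanishP B_orthonormal).
move=> W; split.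
  move=> /(maximal_common_zero_subspaceE B_orthonormal)/maximal_line_stableP.
  by move=> [a [a_eig WE]]; exists a; rewrite (eqmx_rank WE).
move=> [a [a_eig [WE _]]]; apply/(maximal_common_zero_subspaceE B_orthonormal).
by apply/maximal_line_stableP; exists a.
Qed.
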